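(* Let $G$ be a finite group and $\mathcal{A}$ a finite subgroup of $\mathbb{C}^\times$. Let $M$ be a square matrix with entries in $\mathcal{A}$ whose rows and columns are labelled by the elements of $G$ in a fixed ordering. Then $M$ is cocyclic over $G$ if and only if there exist a normalised 2-cocycle $\psi\colon G\times G\to\mathcal{A}$ and a matrix $\mathcal{A}$-equivalent to $M$ lying in the centraliser algebra $\mathrm{C}(R)=\{X : XR(\gamma)=R(\gamma)X\ \forall\gamma\in\Gamma\}$, where $\Gamma=(G,\mathcal{A},\psi)$ and $R$ is the monomial representation $R(a,g)=a\left[\psi(x,g)\delta^{xg}_{y}\right]_{x,y\in G}$ of $\Gamma$.
   Context: A normalised 2-cocycle is a function $\psi\colon G\times G\to\mathcal{A}$ with $\psi(g,1)=\psi(1,g)=1$ and $\psi(g,h)\psi(gh,k)=\psi(g,hk)\psi(h,k)$ for all $g,h,k$. The extension $\Gamma=(G,\mathcal{A},\psi)$ is the group on $\mathcal{A}\times G$ with multiplication $(a,g)(b,h)=(ab\,\psi(g,h),gh)$. A matrix is strictly cocyclic over $G$ if it equals $[\psi(x,y)\phi(xy)]_{x,y\in G}$ for some normalised 2-cocycle $\psi\colon G\times G\to\mathcal{A}$ and some map $\phi\colon G\to\mathcal{A}$. Two matrices $M,M'$ are $\mathcal{A}$-equivalent if $M'=PMQ^\ast$ for monomial matrices $P,Q$ with nonzero entries in $\mathcal{A}$. $M$ is cocyclic over $G$ if it is $\mathcal{A}$-equivalent to a strictly cocyclic matrix. $\delta^a_b$ is the Kronecker delta. *)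

From HB Require Import structures.
From mathcomp Require Import all_boot all_order all_algebra all_fingroup all_field.
Set Implicit Arguments. Unset Strict Implicit. Unset Printing Implicit Defensive.
Import Order.TTheory GRing.Theory Num.Theory.
Local Open Scope ring_scope.

(* The finite group G is a finGroupType gT; the coefficient group A is a
   finite subgroup of the multiplicative group of the complex numbers,
   modelled inside algC (algebraic complex numbers; every finite subgroup of
   C^x consists of roots of unity, hence lies in algC). *)
Definition fin_subgroup_Cx (A : {pred algC}) : Prop :=
  [/\ 1 \in A, 0 \notin A,
      {in A &, forall x y, x * y \in A},
      {in A, forall x, x^-1 \in A}
    & exists s : seq algC, {subset A <= s}].

Definition mxG (gT : finType) (f : gT -> gT -> algC) : 'M[algC]_#|gT| :=
  \matrix_(i, j) f (enum_val i) (enum_val j).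

Definition normalised_cocycle (gT : finGroupType) (A : {pred algC})
    (psi : gT -> gT -> algC) : Prop :=
  [/\ forall g h, psi g h \in A,
      forall g, psi g 1%g = 1 /\ psi 1%g g = 1
    & forall g h k, psi g h * psi (g * h)%g k = psi g (h * k)%g * psi h k].

Definition strictly_cocyclic (gT : finGroupType) (A : {pred algC})
    (M : 'M[algC]_#|gT|) : Prop :=
  exists psi : gT -> gT -> algC, exists phi : gT -> algC,
    [/\ normalised_cocycle A psi, forall g, phi g \in A
      & M = mxG (fun x y => psi x y * phi (x * y)%g)].

Definition monomialA (n : nat) (A : {pred algC}) (P : 'M[algC]_n) : Prop :=
  [/\ forall i, #|[pred j | P i j != 0]| = 1%N,
      forall j, #|[pred i | P i j != 0]| = 1%N
    & forall i j, P i j != 0 -> P i j \in A].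

Definition conjtr (n : nat) (Q : 'M[algC]_n) : 'M[algC]_n :=
  \matrix_(i, j) (Q j i)^*.

Definition A_equivalent (n : nat) (A : {pred algC}) (M M' : 'M[algC]_n) : Prop :=
  exists P Q : 'M[algC]_n,
    [/\ monomialA A P, monomialA A Q & M' = P *m M *m conjtr Q].

Definition cocyclic (gT : finGroupType) (A : {pred algC})
    (M : 'M[algC]_#|gT|) : Prop :=
  exists M', strictly_cocyclic A M' /\ A_equivalent A M M'.

(* monomial representation R(a,g) = a [psi(x,g) delta^{xg}_y]_{x,y} of the
   extension Gamma = (G, A, psi), whose elements are pairs (a, g), a \in A *)
Definition monoRep (gT : finGroupType) (psi : gT -> gT -> algC)
    (a : algC) (g : gT) : 'M[algC]_#|gT| :=
  a *: mxG (fun x y => psi x g * (((x * g)%g == y)%:R)).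

Definition in_centraliser (gT : finGroupType) (A : {pred algC})
    (psi : gT -> gT -> algC) (X : 'M[algC]_#|gT|) : Prop :=
  forall a g, a \in A -> X *m monoRep psi a g = monoRep psi a g *m X.

From HB Require Import structures.
From mathcomp Require Import all_boot all_order all_algebra all_fingroup all_field.
Import GRing.Theory Num.Theory.
Set Implicit Arguments. Unset Strict Implicit. Unset Printing Implicit Defensive.
Local Open Scope ring_scope.

(* Comparing row 1 of X R(1,g) = R(1,g) X shows that a matrix X commuting
   with the monomial representation is determined by its first row h:
   X(x,y) = h(y x^-1) psi(y x^-1, x); conversely the cocycle identity makes
   every such matrix commute with R.  Inverting the column labels
   (y |-> y^-1) and scaling column y by psi(y^-1, y) turns this matrix into
   the strictly cocyclic matrix [psi(x,y) phi(xy)] with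
   phi(z) = h(z^-1) psi(z^-1, z), and every phi arises from some h.  Since
   the elements of A have modulus 1, conjugating a monomial matrix over A
   keeps it monomial over A, so A-equivalence is an equivalence relation
   and the two descriptions match up to A-equivalence. *)

Section FinSubgroupCx.

Variable A : {pred algC}.
Hypothesis finA : fin_subgroup_Cx A.

Lemma fin_subgroup_Cx_neq0 a : a \in A -> a != 0.
Proof. by case: finA => _ A0 _ _ _ aA; apply: contraNneq A0 => <-. Qed.

Lemma fin_subgroup_Cx_unity_root a : a \in A -> exists2 n, (0 < n)%N & a ^+ n = 1.
Proof.
case: finA => A1 _ AM _ [s sA] aA.
have powA k : a ^+ k \in A by elim: k => [|k IHk]; rewrite ?exprS ?AM.
have : ~~ uniq [seq a ^+ k | k <- iota 0 (size s).+1].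
  apply/negP => /uniq_leq_size le_s.
  suff /le_s : {subset [seq a ^+ k | k <- iota 0 (size s).+1] <= s}.
    by rewrite size_map size_iota ltnn.
  by move=> _ /mapP[k _ ->]; apply: sA.
case/(uniqPn 0) => i [j] [lt_ij]; rewrite size_map size_iota => lt_j.
have lt_i := ltn_trans lt_ij lt_j.
rewrite !(nth_map 0%N) ?size_iota // !nth_iota // !add0n => a_ij.
exists (j - i)%N; first by rewrite subn_gt0.
by rewrite expfB // -a_ij divff // expf_neq0 // fin_subgroup_Cx_neq0.
Qed.

Lemma norm_fin_subgroup_Cx a : a \in A -> `|a| = 1.
Proof.
case/fin_subgroup_Cx_unity_root => n n_gt0 an1.
by apply/eqP; rewrite -(pexpr_eq1 n_gt0) // -normrX an1 normr1.
Qed.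

Lemma conj_fin_subgroup_Cx a : a \in A -> a^* = a^-1.
Proof. by move=> aA; rewrite invC_norm norm_fin_subgroup_Cx // expr1n invr1 mul1r. Qed.

Lemma conj_fin_subgroup_Cx_in a : a \in A -> a^* \in A.
Proof. by move=> aA; rewrite conj_fin_subgroup_Cx //; case: finA => _ _ _ ->. Qed.

End FinSubgroupCx.

Lemma sum_mul_delta (R : pzSemiRingType) (T : finType) (F : T -> R) x :
  \sum_y F y * (x == y)%:R = F x.
Proof.
rewrite (bigD1 x) //= eqxx mulr1 big1 ?addr0 // => y.
by rewrite eq_sym => /negbTE->; rewrite mulr0.
Qed.

Section MonomialMatrices.

Variables (n : nat) (A : {pred algC}).

Definition monomial_mx (c : 'I_n -> algC) (s : 'S_n) : 'M[algC]_n :=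
  \matrix_(i, j) (c i * (s i == j)%:R).

Lemma monomialA_monomial_mx c s :
  0 \notin A -> (forall i, c i \in A) -> monomialA A (monomial_mx c s).
Proof.
move=> A0 cA; have c_nz i : c i != 0 by apply: contraNneq A0 => <-.
have monomial_nz i j : (monomial_mx c s i j != 0) = (s i == j).
  by rewrite mxE mulf_eq0 negb_or c_nz pnatr_eq0 eqb0 negbK.
split=> [i | j | i j].
- by apply/eqP/card1P; exists (s i) => j; rewrite !inE monomial_nz eq_sym.
- apply/eqP/card1P; exists (s^-1%g j) => i.
  by rewrite !inE monomial_nz (canF_eq (permK s)).
- by rewrite monomial_nz mxE => /eqP<-; rewrite eqxx mulr1.
Qed.

Lemma monomialAP P : monomialA A P ->
  exists c, exists s, (forall i, c i \in A) /\ P = monomial_mx c s.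
Proof.
case=> rowP colP PA.
have /fin_all_exists [s sP] i : exists j, [pred k | P i k != 0] =i pred1 j.
  by apply/card1P; rewrite rowP.
have /fin_all_exists [r rP] j : exists i, [pred k | P k j != 0] =i pred1 i.
  by apply/card1P; rewrite colP.
have P_nz i j : (P i j != 0) = (j == s i) by have := sP i j; rewrite !inE.
have sK : cancel s r.
  by move=> i; have := rP (s i) i; rewrite !inE P_nz eqxx => /esym/eqP.
exists (fun i => P i (s i)), (perm (can_inj sK)); split.
  by move=> i; apply: PA; rewrite P_nz.
apply/matrixP => i j; rewrite mxE permE.
have [<-|nj] := eqVneq (s i) j; first by rewrite mulr1.
by rewrite mulr0; apply/eqP; rewrite -[_ == 0]negbK P_nz eq_sym.
Qed.

Lemma monomial_mx_equivE c e s t (M : 'M[algC]_n) i j :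
  (monomial_mx c s *m M *m conjtr (monomial_mx e t)) i j = c i * (e j)^* * M (s i) (t j).
Proof.
rewrite mxE; under eq_bigr => k _ do rewrite !mxE rmorphM rmorph_nat /= mulrA.
rewrite sum_mul_delta; under eq_bigr => k _ do rewrite mxE mulrAC.
by rewrite sum_mul_delta mulrAC.
Qed.

End MonomialMatrices.

Definition monomial_equiv n (A : {pred algC}) (M M' : 'M[algC]_n) : Prop :=
  exists c e : 'I_n -> algC, exists s t : 'S_n,
    [/\ forall i, c i \in A, forall j, e j \in A
      & forall i j, M' i j = c i * e j * M (s i) (t j)].

Section MonomialEquivalence.

Variables (n : nat) (A : {pred algC}).
Hypothesis finA : fin_subgroup_Cx A.
Implicit Types M : 'M[algC]_n.

Lemma A_equivalentP M M' : A_equivalent A M M' <-> monomial_equiv A M M'.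
Proof.
split.
  case=> _ [_ [/monomialAP[c [s [cA ->]]] /monomialAP[e [t [eA ->]]] ->]].
  exists c, (fun j => (e j)^*), s, t; split=> // [j | i j].
    exact: conj_fin_subgroup_Cx_in.
  exact: monomial_mx_equivE.
case=> c [e [s [t [cA eA M'E]]]].
have A0 : 0 \notin A by case: finA.
exists (monomial_mx c s), (monomial_mx (fun j => (e j)^*) t); split.
- exact: monomialA_monomial_mx.
- by apply: monomialA_monomial_mx => // j; apply: conj_fin_subgroup_Cx_in.
- by apply/matrixP => i j; rewrite monomial_mx_equivE conjCK.
Qed.

Lemma monomial_equiv_trans M1 M2 M3 :
  monomial_equiv A M1 M2 -> monomial_equiv A M2 M3 -> monomial_equiv A M1 M3.
Proof.
have [_ _ AM _ _] := finA.
case=> c [e [s [t [cA eA E]]]] [c' [e' [s' [t' [cA' eA' E']]]]].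
exists (fun i => c' i * c (s' i)), (fun j => e' j * e (t' j)), (s' * s)%g, (t' * t)%g.
split=> [i | j | i j]; rewrite ?AM //.
by rewrite E' E !permM !mulrA (mulrAC (c' i)).
Qed.

Lemma monomial_equiv_sym M M' : monomial_equiv A M M' -> monomial_equiv A M' M.
Proof.
have [_ _ _ AV _] := finA.
case=> c [e [s [t [cA eA E]]]].
exists (fun i => (c (s^-1%g i))^-1), (fun j => (e (t^-1%g j))^-1), s^-1%g, t^-1%g.
split=> [i | j | i j]; rewrite ?AV // E !permKV -invfM mulKf //.
by rewrite mulf_neq0 // (fin_subgroup_Cx_neq0 finA).
Qed.

Lemma monomial_equiv_valued M M' :
  (forall i j, M i j \in A) -> monomial_equiv A M M' -> forall i j, M' i j \in A.
Proof.
have [_ _ AM _ _] := finA.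
by move=> MA [c [e [s [t [cA eA E]]]]] i j; rewrite E !AM.
Qed.

End MonomialEquivalence.

Section GroupIndexedMatrices.

Variable T : finType.
Implicit Types f g : T -> T -> algC.

Lemma mxGE f x y : mxG f (enum_rank x) (enum_rank y) = f x y.
Proof. by rewrite mxE !enum_rankK. Qed.

Lemma mxG_enum_rank (X : 'M[algC]_#|T|) :
  X = mxG (fun x y => X (enum_rank x) (enum_rank y)).
Proof. by apply/matrixP => i j; rewrite mxE !enum_valK. Qed.

Lemma eq_mxG f g : f =2 g -> mxG f = mxG g.
Proof. by move=> fg; apply/matrixP => i j; rewrite !mxE fg. Qed.

Lemma mxG_mul f g : mxG f *m mxG g = mxG (fun x y => \sum_z f x z * g z y).
Proof.
apply/matrixP => i j; rewrite !mxE [RHS](reindex (enum_val : 'I_#|T| -> T)) /=.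
  by apply: eq_bigr => k _; rewrite !mxE.
by exists enum_rank => x _; rewrite ?enum_valK ?enum_rankK.
Qed.

Lemma ord_perm_inj (s : {perm T}) :
  injective (fun i : 'I_#|T| => enum_rank (s (enum_val i))).
Proof. by move=> i j /enum_rank_inj/perm_inj/enum_val_inj. Qed.

Definition ord_perm (s : {perm T}) : 'S_#|T| := perm (@ord_perm_inj s).

Lemma monomial_equiv_mxG (A : {pred algC}) f f' (c e : T -> algC) (s t : {perm T}) :
  (forall x, c x \in A) -> (forall y, e y \in A) ->
  (forall x y, f' x y = c x * e y * f (s x) (t y)) ->
  monomial_equiv A (mxG f) (mxG f').
Proof.
move=> cA eA f'E; exists (c \o enum_val), (e \o enum_val), (ord_perm s), (ord_perm t).
by split=> [i | j | i j] /=; rewrite ?cA ?eA // !mxE f'E !permE !enum_rankK.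
Qed.

End GroupIndexedMatrices.

Section CentraliserAlgebra.

Variables (gT : finGroupType) (A : {pred algC}) (psi : gT -> gT -> algC).
Hypotheses (A1 : 1 \in A) (psiP : normalised_cocycle A psi).
Implicit Types f : gT -> gT -> algC.

Lemma mxG_mul_monoRep f a g : mxG f *m monoRep psi a g =
  a *: mxG (fun x y => f x (y * g^-1)%g * psi (y * g^-1)%g g).
Proof.
rewrite -scalemxAr mxG_mul; congr (_ *: _); apply: eq_mxG => x y.
under eq_bigr => z _ do rewrite mulrA (canF_eq (mulgK g)) eq_sym.
exact: sum_mul_delta.
Qed.

Lemma monoRep_mul_mxG f a g : monoRep psi a g *m mxG f =
  a *: mxG (fun x y => psi x g * f (x * g)%g y).
Proof.
rewrite -scalemxAl mxG_mul; congr (_ *: _); apply: eq_mxG => x y.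
by under eq_bigr => z _ do rewrite mulrAC; rewrite sum_mul_delta.
Qed.

Definition twisted_mx (h : gT -> algC) : 'M[algC]_#|gT| :=
  mxG (fun x y => h (y * x^-1)%g * psi (y * x^-1)%g x).

Definition cocyclic_mx (phi : gT -> algC) : 'M[algC]_#|gT| :=
  mxG (fun x y => psi x y * phi (x * y)%g).

Lemma twisted_mx_in_centraliser h : in_centraliser A psi (twisted_mx h).
Proof.
have [_ _ cocycle] := psiP.
move=> a g _; rewrite mxG_mul_monoRep monoRep_mul_mxG; congr (_ *: _).
apply: eq_mxG => x y; rewrite invMg mulgA.
have := cocycle (y * g^-1 * x^-1)%g x g; rewrite mulgKV => cocycle_u.
by rewrite -mulrA cocycle_u [RHS]mulrCA [psi x g * _]mulrC.
Qed.

Lemma in_centraliser_twisted X : in_centraliser A psi X ->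
  X = twisted_mx (fun z => X (enum_rank 1%g) (enum_rank z)).
Proof.
have [_ psi1 _] := psiP.
move=> centX; apply/matrixP => i j; rewrite -[i]enum_valK -[j]enum_valK mxGE.
move: (enum_val i) (enum_val j) => x y.
have comm_x := centX 1 x A1; rewrite [X]mxG_enum_rank in comm_x.
move: comm_x; rewrite mxG_mul_monoRep monoRep_mul_mxG !scale1r.
move/(congr1 (fun Y : 'M_#|gT| => Y (enum_rank 1%g) (enum_rank y))).
by rewrite !mxGE mul1g (proj2 (psi1 x)) mul1r.
Qed.

Lemma twisted_cocyclic_equiv h phi :
  (forall z, phi z = h z^-1%g * psi z^-1%g z) ->
  monomial_equiv A (twisted_mx h) (cocyclic_mx phi).
Proof.
have [psiA _ cocycle] := psiP; move=> phiE.
apply: (@monomial_equiv_mxG _ A _ _ (fun _ => 1) (fun y => psi y^-1%g y)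
          1%g (perm (@invg_inj gT))) => // x y.
rewrite perm1 permE mul1r phiE -invMg.
have := cocycle (x * y)^-1%g x y; rewrite invMg mulgKV -invMg => cocycle_xy.
rewrite mulrCA [RHS]mulrCA [psi y^-1%g y * _]mulrC cocycle_xy.
by rewrite [psi _ (x * y)%g * _]mulrC.
Qed.

End CentraliserAlgebra.

Unset Implicit Arguments.

Theorem theorem4p4 (gT : finGroupType) (A : {pred algC})
    (M : 'M[algC]_#|gT|) :
  fin_subgroup_Cx A ->
  (forall i j, M i j \in A) ->
  (cocyclic A M <->
   exists psi : gT -> gT -> algC,
     normalised_cocycle A psi /\
     exists M' : 'M[algC]_#|gT|, A_equivalent A M M' /\ in_centraliser A psi M').
Proof.
move=> finA MA; have [A1 _ AM _ _] := finA.
split.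
- case=> _ [[psi [phi [psiP phiA ->]]] /(A_equivalentP finA) equiv_M].
  pose h z := phi z^-1%g / psi z z^-1%g.
  exists psi; split=> //; exists (twisted_mx psi h).
  split; last exact: twisted_mx_in_centraliser.
  apply/(A_equivalentP finA)/(monomial_equiv_trans finA equiv_M).
  apply/(monomial_equiv_sym finA)/(twisted_cocyclic_equiv A1 psiP) => z.
  have [psiA _ _] := psiP.
  by rewrite /h invgK divfK // (fin_subgroup_Cx_neq0 finA).
- case=> psi [psiP [M' [/(A_equivalentP finA) equiv_M centM']]].
  have [psiA _ _] := psiP.
  pose h z := M' (enum_rank 1%g) (enum_rank z).
  pose phi z := h z^-1%g * psi z^-1%g z.
  exists (cocyclic_mx psi phi); split.
    exists psi, phi; split=> // z.
    by rewrite AM // (monomial_equiv_valued finA MA equiv_M).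
  apply/(A_equivalentP finA)/(monomial_equiv_trans finA equiv_M).
  rewrite {1}(in_centraliser_twisted A1 psiP centM').
  exact: twisted_cocyclic_equiv.
Qed.
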